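(* Let $\alpha>0$ and $\hbar>0$ be constants, and let $\tilde g:\mathbb{R}\setminus\{0\}\to\mathbb{R}$ be a continuously differentiable function. Let $\psi\in L^{2}(\mathbb{R},dp)$ be a nonzero function that is continuously differentiable on $\mathbb{R}\setminus\{0\}$. For $\tau\in\mathbb{R}$ define $$\mathcal{A}_\psi(\tau)=4\pi\int_{\mathbb{R}}dp\,\left|\left(\frac{d\tilde g(p)}{dp}+\frac{\alpha^{2}}{p^{2}}\tau\right)\psi(p)-i\hbar\,\frac{d\psi(p)}{dp}\right|^{2}\in[0,\infty].$$ Then for every $\tau\in\mathbb{R}$ one has $\mathcal{A}_\psi(\tau)>0$; that is, there is no nonzero square-integrable $\psi$ and no $\tau_0\in\mathbb{R}$ with $\mathcal{A}_\psi(\tau_0)=0$.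
   Context: $\mathcal{A}_\psi(\tau)$ is the expectation value, in the physical state with reduced amplitude $\psi(p_a)$, of the gauge-invariant relational observable associated with the area $4\pi a^2$ of 2-spheres in the Schwarzschild interior, at relational clock time $\tau$; here $p=p_a$ and $\tilde g(p)=-\hbar\,g(-\alpha^2/p)$ where $g$ is the phase function specifying the choice of clock. *)

From HB Require Import structures.
From mathcomp Require Import all_boot all_order all_algebra.
From mathcomp Require Import all_classical all_reals all_analysis.
Set Implicit Arguments. Unset Strict Implicit. Unset Printing Implicit Defensive.
Import Order.TTheory GRing.Theory Num.Theory.
Import numFieldNormedType.Exports.
Local Open Scope classical_set_scope.
Local Open Scope ring_scope.

(* The complex wave function psi = u + i v is given by its real part u and
   imaginary part v.  For a(p) = g~'(p) + alpha^2 tau / p^2 we have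
   | a psi - i hbar psi' |^2 = (a u + hbar v')^2 + (a v - hbar u')^2. *)
Definition Aintegrand {R : realType} (alpha hbar : R) (gt u v : R -> R)
  (tau p : R) : R :=
  let a := derive1 gt p + alpha ^+ 2 / p ^+ 2 * tau in
  (a * u p + hbar * derive1 v p) ^+ 2 + (a * v p - hbar * derive1 u p) ^+ 2.

Definition Apsi {R : realType} (alpha hbar : R) (gt u v : R -> R) (tau : R)
  : \bar R :=
  ((4 * pi)%:E * \int[@lebesgue_measure R]_(p in setT)
      (Aintegrand alpha hbar gt u v tau p)%:E)%E.

(* Write a = g~' + alpha^2 tau / p^2.  If the integrand |a psi - i hbar psi'|^2
   is positive at some p <> 0, it is positive on a neighbourhood of p (it is
   continuous away from 0), so the integral is positive.  Otherwise it vanishes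
   on R \ {0}; there the identity
     hbar (u u' + v v') = v (a u + hbar v') - u (a v - hbar u')
   shows that |psi|^2 = u^2 + v^2 has zero derivative, hence is constant on
   each of the half-lines p < 0 and p > 0.  A nonzero constant on a half-line
   is not integrable, so square integrability forces psi = 0 off the null
   set {0}. *)
From HB Require Import structures.
From mathcomp Require Import all_boot all_order all_algebra.
From mathcomp Require Import all_classical all_reals all_analysis.
From mathcomp Require Import ring lra.
Import Order.TTheory GRing.Theory Num.Theory.
Import numFieldNormedType.Exports.
Local Open Scope classical_set_scope.
Local Open Scope ring_scope.

Section Integrals.
Context {R : realType}.
Local Notation mu := (@lebesgue_measure R).

Lemma continuous_punctured_measurable (f : R -> R) (c : R) :
  (forall p, p != c -> {for p, continuous f}) -> measurable_fun setT f.
Proof.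
move=> cf; rewrite -(setUv [set c]) setUC.
have oC : open (~` [set c]).
  exact/closed_openC/accessible_closed_set1/hausdorff_accessible/Rhausdorff.
apply/measurable_funU => //; first exact: measurable_realfun.open_measurable.
split; last exact: measurable_fun_set1.
apply: measurable_realfun.open_continuous_measurable_fun => // p.
by rewrite inE => /eqP; apply: cf.
Qed.

Lemma ge0_continuous_integral_gt0 (f : R -> R) (p : R) :
  measurable_fun setT f -> (forall x, 0 <= f x) ->
  {for p, continuous f} -> 0 < f p ->
  (0 < \int[mu]_(x in setT) (f x)%:E)%E.
Proof.
move=> mf f_ge0 cf fp_gt0.
have half_lt : f p / 2 < f p by lra.
have [e /= e_gt0 fe] := (nbhs_ballP _ _).1 (@cvgr_gt _ _ _ _ f _ cf _ half_lt).
set I := `](p - e), (p + e)[.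
apply: (@lt_le_trans _ _ (\int[mu]_(x in [set` I]) (f p / 2)%:E)%E).
  rewrite integral_cst //= lebesgue_measure_itv /= lte_fin ifT; last lra.
  by rewrite -EFinB mule_gt0 // lte_fin; lra.
apply: (@le_trans _ _ (\int[mu]_(x in [set` I]) (f x)%:E)%E).
  apply: ge0_le_integral => //.
  - by move=> x _; rewrite lee_fin; lra.
  - by apply/measurable_realfun.measurable_EFinP; apply: measurable_funS mf.
  - by move=> x xI; rewrite lee_fin ltW // fe // ball_itv.
apply: ge0_subset_integral => //.
  exact/measurable_realfun.measurable_EFinP.
by move=> x _; rewrite lee_fin.
Qed.

Lemma ge0_integral_ge_cst_pinfty (h : R -> R) (S : set R) (C : R) :
  measurable_fun setT h -> (forall x, 0 <= h x) ->
  measurable S -> mu S = +oo%E -> 0 < C -> (forall x, S x -> C <= h x) ->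
  (\int[mu]_(x in setT) (h x)%:E = +oo)%E.
Proof.
move=> mh h_ge0 mS S_oo C_gt0 hC; apply/eqP; rewrite -leye_eq.
have -> : +oo%E = (\int[mu]_(x in S) (cst C%:E) x)%E.
  rewrite integral_cst //; set M := (X in (_ * X)%E).
  have -> : M = +oo%E by exact: S_oo.
  by rewrite gt0_muley // lte_fin.
apply: (@le_trans _ _ (\int[mu]_(x in S) (h x)%:E)%E).
  apply: ge0_le_integral => //.
  - by move=> x _; rewrite lee_fin ltW.
  - by apply/measurable_realfun.measurable_EFinP; apply: measurable_funS mh.
apply: ge0_subset_integral => //.
  exact/measurable_realfun.measurable_EFinP.
by move=> x _; rewrite lee_fin.
Qed.

Lemma ge0_integrable_halfline_cst_eq0 (h : R -> R) :
  measurable_fun setT h -> (forall x, 0 <= h x) ->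
  (\int[mu]_(x in setT) (h x)%:E < +oo)%E ->
  (forall x y, 0 < x * y -> h x = h y) ->
  forall p, p != 0 -> h p = 0.
Proof.
move=> mh h_ge0 h_fin h_cst p p0; apply/eqP; rewrite eq_le h_ge0 andbT leNgt.
apply/negP => hp_gt0; move: h_fin; rewrite ltNge leye_eq => /negP; apply.
have on_halfline (S : set R) : measurable S -> mu S = +oo%E ->
    (forall x, S x -> 0 < x * p) -> (\int[mu]_(x in setT) (h x)%:E == +oo)%E.
  move=> mS S_oo Sp; apply/eqP.
  apply: (@ge0_integral_ge_cst_pinfty _ S (h p) mh h_ge0 mS S_oo hp_gt0).
  by move=> x /Sp /h_cst ->.
have [p_lt0|p_gt0] := ltP p 0.
- apply: (on_halfline `]-oo, 0[%classic) => //.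
    by rewrite lebesgue_measure_itv /= ltNye.
  by move=> x; rewrite /= in_itv /= => x_lt0; rewrite nmulr_rgt0.
- have {p_gt0} p_gt0 : 0 < p by rewrite lt_def p0.
  apply: (on_halfline `]0, +oo[%classic) => //.
    by rewrite lebesgue_measure_itv /= ltry.
  by move=> x; rewrite /= in_itv /= andbT => x_gt0; rewrite mulr_gt0.
Qed.

Lemma ae_lebesgue_neq0 (P : R -> Prop) :
  (forall p, p != 0 -> P p) -> {ae mu, forall p, P p}.
Proof.
move=> HP; have null0 : mu.-negligible [set 0].
  by apply/negligibleP => //; exact: lebesgue_measure_set1.
by apply: negligibleS null0 => p /= nPp; apply: contrapT => /eqP /HP.
Qed.

End Integrals.

Section Derivatives.
Context {R : realType}.

Lemma is_derive0_eq_segment (f : R -> R) (a b : R) : a <= b ->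
  (forall x, a <= x <= b -> is_derive x 1 f 0) -> f a = f b.
Proof.
move=> ab df; apply/eqP; rewrite eq_sym -subr_eq0.
have df_in (x : R) : x \in `]a, b[ -> is_derive x 1 f 0.
  by rewrite in_itv /= => /andP[ax xb]; apply: df; rewrite !ltW.
have cf : {within `[a, b], continuous f}.
  by apply: derivable_within_continuous => x; rewrite in_itv /= => /df [].
by have [c _ ->] := @MVT_segment _ f (fun=> 0) _ _ ab df_in cf; rewrite mul0r.
Qed.

Lemma is_derive0_eq_sign (f : R -> R) :
  (forall x : R, x != 0 -> is_derive x (1 : R) f 0) ->
  forall x y, 0 < x * y -> f x = f y.
Proof.
move=> df x y; wlog xy : x y / x <= y.
  by move=> H; case: (leP x y) => [/H//|/ltW yx]; rewrite mulrC => /(H _ _ yx).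
move=> xy_gt0; apply: is_derive0_eq_segment xy _ => z /andP[xz zy]; apply: df.
have [x_gt0|x_le0] := ltP 0 x; first by rewrite gt_eqF // (lt_le_trans x_gt0).
have y_lt0 : y < 0 by nra.
by rewrite lt_eqF // (le_lt_trans zy).
Qed.

Lemma addr_sqr_eq0 (x y : R) : (x ^+ 2 + y ^+ 2 == 0) = (x == 0) && (y == 0).
Proof. by rewrite paddr_eq0 ?sqr_ge0 // !sqrf_eq0. Qed.

Definition sqr_norm (u v : R -> R) (p : R) : R := u p ^+ 2 + v p ^+ 2.

Lemma sqr_norm_ge0 (u v : R -> R) (p : R) : 0 <= sqr_norm u v p.
Proof. by rewrite addr_ge0 ?sqr_ge0. Qed.

Lemma is_derive_sqr_norm (u v : R -> R) (p : R) :
  derivable u p 1 -> derivable v p 1 ->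
  is_derive p 1 (sqr_norm u v) ((u p * derive1 u p + v p * derive1 v p) *+ 2).
Proof.
move=> /derivableP du /derivableP dv; rewrite !derive1E.
have -> : sqr_norm u v = u * u + v * v.
  by apply/funext => x; rewrite /sqr_norm /= !expr2.
have := is_deriveD (is_deriveM du du) (is_deriveM dv dv).
by rewrite -!mulr2n mulrnDl.
Qed.

End Derivatives.

Section Integrand.
Context {R : realType}.
Variables (alpha hbar : R) (gt u v : R -> R) (tau : R).
Local Notation f := (Aintegrand alpha hbar gt u v tau).

Lemma Aintegrand_ge0 (p : R) : 0 <= f p.
Proof. by rewrite addr_ge0 ?sqr_ge0. Qed.

Lemma Aintegrand_continuous (p : R) : p != 0 ->
  derivable u p 1 -> derivable v p 1 ->
  {for p, continuous (derive1 gt)} ->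
  {for p, continuous (derive1 u)} -> {for p, continuous (derive1 v)} ->
  {for p, continuous f}.
Proof.
move=> p0 du dv cg' cu' cv'.
have cu : {for p, continuous u}.
  by move/derivable1_diffP/differentiable_continuous: du.
have cv : {for p, continuous v}.
  by move/derivable1_diffP/differentiable_continuous: dv.
have cc (c : R) : {for p, continuous (fun=> c)} by exact: cst_continuous.
have ca :
    {for p, continuous (fun x => derive1 gt x + alpha ^+ 2 / x ^+ 2 * tau)}.
  apply: continuousD; first exact: cg'.
  apply: continuousM => //; apply: continuousM => //.
  by apply: continuousV; [rewrite expf_neq0 | exact: exprn_continuous].
rewrite /Aintegrand; apply: continuousD; apply: continuousM.
- by apply: continuousD; apply: continuousM.
- by apply: continuousD; apply: continuousM.
- by apply: continuousB; apply: continuousM.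
- by apply: continuousB; apply: continuousM.
Qed.

Lemma Aintegrand_eq0_is_derive_sqr_norm (p : R) : hbar != 0 ->
  derivable u p 1 -> derivable v p 1 -> f p = 0 ->
  is_derive p 1 (sqr_norm u v) 0.
Proof.
move=> hbar0 du dv; rewrite /Aintegrand; set a := derive1 gt p + _.
move=> /eqP; rewrite addr_sqr_eq0 => /andP[/eqP X0 /eqP Y0].
have : hbar * (u p * derive1 u p + v p * derive1 v p) =
    v p * (a * u p + hbar * derive1 v p) - u p * (a * v p - hbar * derive1 u p).
  by ring.
rewrite X0 Y0 !mulr0 subr0 => /eqP; rewrite mulf_eq0 (negbTE hbar0) => /eqP d0.
by have := is_derive_sqr_norm _ _ _ du dv; rewrite d0 mul0rn.
Qed.

End Integrand.

Theorem mainTheorem1 (R : realType) (alpha hbar : R) (gt u v : R -> R)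
  (halpha : 0 < alpha) (hhbar : 0 < hbar)
  (* g~ is C^1 on R \ {0} *)
  (hg_der : forall p : R, p != 0 -> derivable gt p 1)
  (hg_cont : forall p : R, p != 0 -> {for p, continuous (derive1 gt)})
  (* psi = u + i v is C^1 on R \ {0} *)
  (hu_der : forall p : R, p != 0 -> derivable u p 1)
  (hu_cont : forall p : R, p != 0 -> {for p, continuous (derive1 u)})
  (hv_der : forall p : R, p != 0 -> derivable v p 1)
  (hv_cont : forall p : R, p != 0 -> {for p, continuous (derive1 v)})
  (* psi is in L^2(R, dp) *)
  (hu_meas : measurable_fun setT u) (hv_meas : measurable_fun setT v)
  (hL2 : (\int[@lebesgue_measure R]_(p in setT) ((u p) ^+ 2 + (v p) ^+ 2)%:E
           < +oo)%E)
  (* psi is nonzero as an element of L^2 (not almost everywhere zero) *)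
  (hnz : ~ {ae @lebesgue_measure R, forall p, u p = 0 /\ v p = 0}) :
  forall tau : R, (0 < Apsi alpha hbar gt u v tau)%E.
Proof.
move=> tau; set f := Aintegrand alpha hbar gt u v tau.
have f_cont p : p != 0 -> {for p, continuous f}.
  by move=> p0; apply: Aintegrand_continuous; auto.
rewrite /Apsi mule_gt0 ?lte_fin ?mulr_gt0 ?pi_gt0 //.
have [[p p0 fp_gt0]|f_le0] := pselect (exists2 p, p != 0 & 0 < f p).
  apply: ge0_continuous_integral_gt0 (f_cont p p0) fp_gt0.
    exact: continuous_punctured_measurable f_cont.
  exact: Aintegrand_ge0.
have N_der0 (p : R) : p != 0 -> is_derive p (1 : R) (sqr_norm u v) 0.
  move=> p0; apply: (Aintegrand_eq0_is_derive_sqr_norm alpha hbar gt _ _ tau);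
    [by rewrite gt_eqF | exact: hu_der | exact: hv_der |].
  apply/eqP; rewrite eq_le Aintegrand_ge0 andbT leNgt; apply/negP => fp_gt0.
  by apply: f_le0; exists p.
have N_meas : measurable_fun setT (sqr_norm u v).
  by apply: measurable_realfun.measurable_funD;
    apply: measurable_realfun.measurable_funX.
have N_fin : (\int[lebesgue_measure]_(p in setT) (sqr_norm u v p)%:E < +oo)%E.
  exact: hL2.
have N_eq0 := ge0_integrable_halfline_cst_eq0 (sqr_norm u v) N_meas
  (sqr_norm_ge0 u v) N_fin (is_derive0_eq_sign _ N_der0).
case: hnz; apply: ae_lebesgue_neq0 => p /N_eq0 /eqP.
by rewrite addr_sqr_eq0 => /andP[/eqP ? /eqP].
Qed.
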